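(* Let $k\ge 1$, let $(\varphi,G,H)$ be a $k$-orbit-form and $\sigma$ a $k$-molecule over $I$. Then for every automorphism $\pi\in\mathrm{Aut}(I)$ we have $\pi\big((\varphi,G,H)*\sigma\big)=(\varphi,G,H)*\pi\sigma$.
   Context: $I$ is a finite set of atoms partitioned into a finite set $C$ of colours. $\mathrm{Sym}(I)$ is the group of all permutations of $I$, and $\mathrm{Aut}(I)\subseteq\mathrm{Sym}(I)$ the subgroup of permutations mapping each colour onto itself. Permutations act on hereditarily finite sets over $I$ by $\theta(x)=\{\theta(y)\mid y\in x\}$; for a set $G$ of permutations and object $x$, $G(x)=Gx=\{g(x)\mid g\in G\}$. A $k$-molecule is an injective map $\sigma:\{0,\dots,k-1\}\to I$; $\pi\sigma$ denotes composition. The configuration $\mathit{conf}(\sigma_0,\dots,\sigma_{\ell-1})$ of a sequence of $k$-molecules is the pair $(\sim,col)$ where $\sim$ is the equivalence relation on $\{0,\dots,\ell-1\}\times\{0,\dots,k-1\}$ with $(i,p)\sim(j,q)$ iff $\sigma_i(p)=\sigma_j(q)$, and $col(i,p)$ is the colour containing $\sigma_i(p)$. An abstract $\ell$-configuration is a pair $(\sim,col)$ with $\sim$ an equivalence relation on $\{0,\dots,\ell-1\}\times\{0,\dots,k-1\}$ such that $(i,p)\sim(i,q)\Leftrightarrow p=q$, and $col:\{0,\dots,\ell-1\}\times\{0,\dots,k-1\}\to C$ constant on $\sim$-classes. The $k$-forms form the smallest set containing new symbols $c_0,\dots,c_{k-1}$ and all finite sets $\{(\varphi_i,E_i)\mid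 1\le i\le n\}$ with $\varphi_i$ $k$-forms and $E_i$ abstract 2-configurations. For a $k$-form $\varphi$ and $k$-molecule $\sigma$: $c_p*\sigma=\sigma(p)$, and for $\varphi=\{(\varphi_i,E_i)\mid 1\le i\le n\}$, $\varphi*\sigma=\{\varphi_i*\tau\mid 1\le i\le n,\ \tau \text{ a }k\text{-molecule with } E_i=\mathit{conf}(\tau,\sigma)\}$. A $k$-orbit-form is a triple $(\varphi,G,H)$ with $\varphi$ a $k$-form and $H\subseteq G\subseteq\mathrm{Sym}(I)$ subgroups commuting with $\mathrm{Aut}(I)$ in the sense $\pi G=G\pi$ and $\pi H=H\pi$ for all $\pi\in\mathrm{Aut}(I)$. Define $(\varphi,G,H)*\sigma=G\big(\bigcup_{h\in H}\varphi*h\sigma\big)$, where for $\varphi=c_p$ and $H\neq 1$ the term $\varphi*h\sigma$ inside the union is understood as $\{c_p*h\sigma\}$. *)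

From mathcomp Require Import all_boot all_fingroup.
Set Implicit Arguments. Unset Strict Implicit. Unset Printing Implicit Defensive.

Local Open Scope group_scope.

(* Raw representation: an atom, or a finite set given by a list of its
   elements; equality of sets is extensional equality [hf_eq]. *)
Inductive hf (I : Type) := Atom of I | Node of seq (hf I).
Arguments Atom {I}. Arguments Node {I}.

Section HF.
Variable I : eqType.

Fixpoint hf_eq (x y : hf I) {struct x} : bool :=
  match x, y with
  | Atom a, Atom b => a == b
  | Node l, Node m =>
      all (fun x' => has (hf_eq x') m) l &&
      all (fun y' => has (fun x' => hf_eq x' y') l) m
  | _, _ => false
  end.

Definition hf_elems (x : hf I) : seq (hf I) :=
  match x with Atom _ => [::] | Node l => l end.
End HF.

Fixpoint hf_act (I : finType) (t : {perm I}) (x : hf I) : hf I :=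
  match x with
  | Atom a => Atom (t a)
  | Node l => Node (map (hf_act t) l)
  end.

Definition hf_orbit (I : finType) (G : {set {perm I}}) (x : hf I) : hf I :=
  Node [seq hf_act g x | g <- enum G].

(* The partition of I into colours is given by the map [col : I -> C]
   sending an atom to its colour. *)
Definition AutI (I C : finType) (col : I -> C) : {set {perm I}} :=
  [set p : {perm I} | [forall x, col (p x) == col x]].

Section Molecules.
Variables (I C : finType) (col : I -> C) (k : nat).

Definition molecule (s : {ffun 'I_k -> I}) : bool := injectiveb s.

Definition mol_comp (p : {perm I}) (s : {ffun 'I_k -> I}) : {ffun 'I_k -> I} :=
  [ffun i => p (s i)].

(* abstract 2-configurations: (~, col) on {0,1} x {0..k-1} *)
Definition config := ({ffun ('I_2 * 'I_k) * ('I_2 * 'I_k) -> bool}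
                      * {ffun ('I_2 * 'I_k) -> C})%type.

Definition abstract_conf (E : config) : bool :=
  let R := fun u v => E.1 (u, v) in
  [&& [forall u, R u u],
      [forall u, forall v, R u v ==> R v u],
      [forall u, forall v, forall w, R u v ==> R v w ==> R u w],
      [forall i, forall p, forall q, R (i, p) (i, q) == (p == q)] &
      [forall u, forall v, R u v ==> (E.2 u == E.2 v)]].

Definition pick2 (t s : {ffun 'I_k -> I}) (i : 'I_2) : {ffun 'I_k -> I} :=
  if val i == 0 then t else s.

Definition conf (t s : {ffun 'I_k -> I}) : config :=
  ([ffun uv : ('I_2 * 'I_k) * ('I_2 * 'I_k) =>
      pick2 t s uv.1.1 uv.1.2 == pick2 t s uv.2.1 uv.2.2],
   [ffun u : 'I_2 * 'I_k => col (pick2 t s u.1 u.2)]).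

Definition mols_with (E : config) (s : {ffun 'I_k -> I}) : seq {ffun 'I_k -> I} :=
  [seq t <- enum {ffun 'I_k -> I} | molecule t && (conf t s == E)].

(* FC p = c_p ;  FS l = the finite set {(phi_i, E_i)} listed by l *)
Inductive form := FC of 'I_k | FS of seq (form * config).

Fixpoint wf_form (f : form) : bool :=
  match f with
  | FC _ => true
  | FS l => all (fun fe => let: (f', E) := fe in wf_form f' && abstract_conf E) l
  end.

Fixpoint fstar (f : form) (s : {ffun 'I_k -> I}) : hf I :=
  match f with
  | FC p => Atom (s p)
  | FS l => Node (flatten (map (fun fe => let: (f', E) := fe in
                                 map (fun t => fstar f' t) (mols_with E s)) l))
  end.

(* (phi, G, H) * sigma = G ( U_{h in H} phi * h sigma ), where for phi = c_p
   and H <> 1 the term phi * h sigma is read as {c_p * h sigma}. *)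
Definition ostar (f : form) (G H : {set {perm I}}) (s : {ffun 'I_k -> I}) : hf I :=
  let U := match f with
           | FC p => if H == 1 then Atom (s p)
                     else Node [seq Atom (h (s p)) | h : {perm I} <- enum H]
           | FS _ => Node (flatten [seq hf_elems (fstar f (mol_comp h s)) | h : {perm I} <- enum H])
           end in
  hf_orbit G U.

Definition commutes_Aut (G : {set {perm I}}) : Prop :=
  forall pi, pi \in AutI col -> pi *: G = G :* pi.

End Molecules.

(* An automorphism pi of I preserves colours and equality of atoms, so
   conf(pi tau, pi sigma) = conf(tau, sigma); as tau |-> pi tau is a bijection
   of molecules, induction on phi gives pi(phi * sigma) = phi * pi sigma.  For
   the group parts, pi(G x) = (G pi) x = (pi G) x = G(pi x) because pi commutes
   with G, and the same computation for H handles the union over h in H.  All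
   equalities are extensional equalities of hereditarily finite sets. *)

From HB Require Import structures.
From mathcomp Require Import all_boot all_fingroup.

Set Implicit Arguments. Unset Strict Implicit. Unset Printing Implicit Defensive.
Local Open Scope group_scope.

Fixpoint hf_tree (I : Type) (x : hf I) : GenTree.tree I :=
  match x with
  | Atom a => GenTree.Leaf a
  | Node l => GenTree.Node 0 (map (@hf_tree I) l)
  end.

Fixpoint tree_hf (I : Type) (t : GenTree.tree I) : hf I :=
  match t with
  | GenTree.Leaf a => Atom a
  | GenTree.Node _ l => Node (map (@tree_hf I) l)
  end.

Lemma hf_treeK (I : Type) : cancel (@hf_tree I) (@tree_hf I).
Proof.
rewrite /cancel; fix IH 1; case=> [a | l] //=; congr Node.
by elim: l => //= x l ->; rewrite IH.
Qed.

(* Structural equality, used only for membership in lists: the extensional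
   equality of hereditarily finite sets remains [hf_eq]. *)
HB.instance Definition _ (I : eqType) := Equality.copy (hf I) (can_type (@hf_treeK I)).

Section ExtensionalEquality.
Variable I : eqType.
Implicit Types (x y z : hf I) (l m : seq (hf I)).

Lemma hf_elem_ind (P : hf I -> Prop) :
  (forall a, P (Atom a)) -> (forall l, {in l, forall x, P x} -> P (Node l)) ->
  forall x, P x.
Proof.
move=> PA PN; fix IH 1; case=> [a | l]; first exact: PA.
apply: PN; elim: l => [x | y l IHl x]; first discriminate.
by rewrite inE => /predU1P[-> | /IHl].
Qed.

Lemma hf_eqxx x : hf_eq x x.
Proof.
elim/hf_elem_ind: x => [a | l IHl] /=; first exact: eqxx.
by apply/andP; split; apply/allP => x xl; apply/hasP; exists x => //; exact: IHl.
Qed.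

Lemma hf_eq_sym x y : hf_eq x y = hf_eq y x.
Proof.
elim/hf_elem_ind: x y => [a | l IHl] [b | m] //=.
rewrite andbC; congr andb.
  by apply: eq_all => y; apply: eq_in_has => x /IHl->.
by apply: eq_in_all => x /IHl /eq_has->.
Qed.

Lemma hf_eq_trans y x z : hf_eq x y -> hf_eq y z -> hf_eq x z.
Proof.
elim/hf_elem_ind: y x z => [b | m IHm] [a | l] [c | n] //=.
  by move=> /eqP-> /eqP->.
move=> /andP[/allP lm /allP ml] /andP[/allP mn /allP nm].
apply/andP; split; apply/allP.
- move=> x /lm /hasP[y ym xy]; have /hasP[z zn yz] := mn y ym.
  by apply/hasP; exists z; last exact: IHm xy yz.
- move=> z /nm /hasP[y ym yz]; have /hasP[x xl xy] := ml y ym.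
  by apply/hasP; exists x; last exact: IHm xy yz.
Qed.

Definition hf_sub l m := all (fun x => has (hf_eq x) m) l.

Lemma hf_subP l m :
  reflect {in l, forall x, exists2 y, y \in m & hf_eq x y} (hf_sub l m).
Proof. by apply: (iffP allP) => lm x /lm /hasP. Qed.

Lemma hf_eq_Node l m : hf_eq (Node l) (Node m) = hf_sub l m && hf_sub m l.
Proof.
by congr andb; apply: eq_all => y; apply: eq_has => x; rewrite hf_eq_sym.
Qed.

Lemma hf_sub_cat l1 l2 m1 m2 :
  hf_sub l1 m1 -> hf_sub l2 m2 -> hf_sub (l1 ++ l2) (m1 ++ m2).
Proof.
move=> /hf_subP lm1 /hf_subP lm2; apply/hf_subP => x.
rewrite mem_cat => /orP[/lm1 | /lm2] [y ym xy].
  by exists y; rewrite // mem_cat ym.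
by exists y; rewrite // mem_cat ym orbT.
Qed.

Lemma hf_eq_Node_cat l1 l2 m1 m2 :
  hf_eq (Node l1) (Node m1) -> hf_eq (Node l2) (Node m2) ->
  hf_eq (Node (l1 ++ l2)) (Node (m1 ++ m2)).
Proof.
rewrite !hf_eq_Node => /andP[lm1 ml1] /andP[lm2 ml2].
by rewrite !hf_sub_cat.
Qed.

Lemma hf_eq_Node_mem l m : l =i m -> hf_eq (Node l) (Node m).
Proof.
move=> eq_lm; rewrite hf_eq_Node.
apply/andP; split; apply/hf_subP => x xl; exists x; rewrite ?hf_eqxx //.
  by rewrite -eq_lm.
by rewrite eq_lm.
Qed.

Lemma hf_eq_Node_map (T : eqType) (f g : T -> hf I) (s : seq T) :
  {in s, forall t, hf_eq (f t) (g t)} -> hf_eq (Node (map f s)) (Node (map g s)).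
Proof.
move=> fg; rewrite hf_eq_Node.
apply/andP; split; apply/hf_subP => _ /mapP[t ts ->].
  by exists (g t); [exact: map_f | exact: fg].
by exists (f t); [exact: map_f | rewrite hf_eq_sym; exact: fg].
Qed.

Lemma hf_sub_elems x y : hf_eq x y -> hf_sub (hf_elems x) (hf_elems y).
Proof. by case: x y => [a | l] [b | m] // /[!hf_eq_Node] /andP[]. Qed.

Definition hf_union x : hf I := Node (flatten (map (@hf_elems I) (hf_elems x))).

Lemma hf_sub_union l m :
  hf_sub l m -> hf_sub (flatten (map (@hf_elems I) l)) (flatten (map (@hf_elems I) m)).
Proof.
move=> /hf_subP lm; apply/hf_subP => z /flattenP[_ /mapP[x xl ->]].
have [y ym /hf_sub_elems /hf_subP xy] := lm x xl.
move=> /xy[w wy zw]; exists w => //.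
by apply/flattenP; exists (hf_elems y); first exact: map_f.
Qed.

Lemma hf_eq_union : {homo hf_union : x y / hf_eq x y}.
Proof.
case=> [a | l] [b | m] //; rewrite hf_eq_Node => /andP[lm ml].
by rewrite /hf_union hf_eq_Node !hf_sub_union.
Qed.

End ExtensionalEquality.

Lemma image_rcoset (gT : finGroupType) (T : eqType) (F : gT -> T) (A : {set gT}) x :
  image F (A :* x) =i image (fun a => F (a * x)) A.
Proof.
move=> y; apply/imageP/imageP => [[_ /rcosetP[a aA ->] ->] | [a aA ->]].
  by exists a.
by exists (a * x); first by apply/rcosetP; exists a.
Qed.

Lemma image_lcoset (gT : finGroupType) (T : eqType) (F : gT -> T) (A : {set gT}) x :
  image F (x *: A) =i image (fun a => F (x * a)) A.
Proof.
move=> y; apply/imageP/imageP => [[_ /lcosetP[a aA ->] ->] | [a aA ->]].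
  by exists a.
by exists (x * a); first by apply/lcosetP; exists a.
Qed.

Section Action.
Variable I : finType.
Implicit Types (x y : hf I) (p q : {perm I}).

Lemma hf_actM p q x : hf_act p (hf_act q x) = hf_act (q * p) x.
Proof.
elim/hf_elem_ind: x => [a | l IHl] /=; first by rewrite permM.
by rewrite -map_comp; congr Node; apply/eq_in_map => x /IHl.
Qed.

Lemma hf_eq_act p : {homo hf_act p : x y / hf_eq x y}.
Proof.
move=> x y; elim/hf_elem_ind: x y => [a | l IHl] [b | m] //.
  by move=> /eqP->; apply: hf_eqxx.
rewrite !hf_eq_Node => /andP[/hf_subP lm /hf_subP ml].
apply/andP; split; apply/hf_subP => _ /mapP[x xs ->].
  by have [y ym /IHl xy] := lm x xs; exists (hf_act p y); [exact: map_f | exact: xy].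
have [y yl yx] := ml x xs; exists (hf_act p y); first exact: map_f.
by rewrite hf_eq_sym; apply: IHl; rewrite // hf_eq_sym.
Qed.

Lemma hf_union_act p x : hf_act p (hf_union x) = hf_union (hf_act p x).
Proof.
case: x => [// | l]; rewrite /hf_union /= map_flatten -!map_comp.
by congr (Node (flatten _)); apply: eq_map => -[].
Qed.

(* Commuting [p] with [A] turns the right translates [g * p] into left ones. *)
Lemma hf_act_image (A : {set {perm I}}) (F G : {perm I} -> hf I) p :
  p *: A = A :* p -> {in A, forall g, hf_eq (hf_act p (F g)) (G (g * p))} ->
  hf_eq (hf_act p (Node (image F A))) (Node (image (fun g => G (p * g)) A)).
Proof.
move=> pA FG; rewrite [hf_act _ _]/= -map_comp.
apply: hf_eq_trans (hf_eq_Node_map (g := fun g => G (g * p)) _) _.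
  by move=> g; rewrite mem_enum => /FG.
by apply: hf_eq_Node_mem => y; rewrite -(image_rcoset G) -pA image_lcoset.
Qed.

Lemma hf_orbit_act (A : {set {perm I}}) p x y :
  p *: A = A :* p -> hf_eq (hf_act p x) y ->
  hf_eq (hf_act p (hf_orbit A x)) (hf_orbit A y).
Proof.
move=> pA pxy.
have FG : {in A, forall g, hf_eq (hf_act p (hf_act g x)) (hf_act (g * p) x)}.
  by move=> g _; rewrite hf_actM hf_eqxx.
apply: hf_eq_trans (hf_act_image (G := fun g => hf_act g x) pA FG) _.
by apply: hf_eq_Node_map => g _; rewrite -hf_actM; apply: hf_eq_act.
Qed.

End Action.

Section Molecules.
Variables (I C : finType) (col : I -> C) (k : nat).
Implicit Types (s t : {ffun 'I_k -> I}) (p q : {perm I}).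

Lemma mol_compM p q t : mol_comp p (mol_comp q t) = mol_comp (q * p) t.
Proof. by apply/ffunP => i; rewrite !ffunE permM. Qed.

Lemma mol_comp1 t : mol_comp 1 t = t.
Proof. by apply/ffunP => i; rewrite ffunE perm1. Qed.

Lemma mol_compK p : cancel (@mol_comp I k p) (mol_comp p^-1).
Proof. by move=> t; rewrite mol_compM mulgV mol_comp1. Qed.

Lemma mol_compVK p : cancel (@mol_comp I k p^-1) (mol_comp p).
Proof. by move=> t; rewrite mol_compM mulVg mol_comp1. Qed.

Lemma molecule_comp p t : molecule (mol_comp p t) = molecule t.
Proof.
apply/injectiveP/injectiveP => inj_t i j; last by rewrite !ffunE => /perm_inj /inj_t.
by move=> tij; apply: inj_t; rewrite !ffunE tij.
Qed.

Lemma conf_comp p s t : p \in AutI col ->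
  conf col (mol_comp p t) (mol_comp p s) = conf col t s.
Proof.
rewrite inE => /forallP col_p.
have pick2_comp i : pick2 (mol_comp p t) (mol_comp p s) i = mol_comp p (pick2 t s i).
  by rewrite /pick2; case: ifP.
congr pair; apply/ffunP => u; rewrite !ffunE !pick2_comp !ffunE.
  exact: (inj_eq perm_inj).
exact/eqP/col_p.
Qed.

Lemma mem_mols_with E s t :
  (t \in mols_with col E s) = molecule t && (conf col t s == E).
Proof. by rewrite mem_filter mem_enum andbT. Qed.

Lemma mols_with_comp p E s : p \in AutI col ->
  mols_with col E (mol_comp p s) =i map (mol_comp p) (mols_with col E s).
Proof.
move=> p_Aut t; rewrite -[t](mol_compVK p) mem_map; last exact: can_inj (mol_compK p).
by rewrite !mem_mols_with molecule_comp conf_comp.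
Qed.

Lemma form_cons_ind (P : form C k -> Prop) :
  (forall i, P (FC C i)) -> P (FS [::]) ->
  (forall f E l, P f -> P (FS l) -> P (FS ((f, E) :: l))) ->
  forall f, P f.
Proof.
move=> PC Pnil Pcons; fix IH 1; case=> [i | l]; first exact: PC.
by elim: l => [| [f E] l IHl]; last exact: Pcons (IH f) IHl.
Qed.

Lemma fstar_comp p f s : p \in AutI col ->
  hf_eq (hf_act p (fstar col f s)) (fstar col f (mol_comp p s)).
Proof.
move=> p_Aut; elim/form_cons_ind: f s => [i | | f E l IHf IHl] s.
- by rewrite /= ffunE.
- by [].
- rewrite [hf_act _ _]/= [flatten _]/= map_cat; apply: hf_eq_Node_cat; last exact: IHl.
  have IHf' : {in mols_with col E s, forall t,
      hf_eq (hf_act p (fstar col f t)) (fstar col f (mol_comp p t))}.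
    by move=> t _; apply: IHf.
  rewrite -map_comp; apply: hf_eq_trans (hf_eq_Node_map IHf') _.
  apply: hf_eq_Node_mem; rewrite map_comp; apply: eq_mem_map => t.
  by rewrite mols_with_comp.
Qed.

Lemma fstar_image_comp p f (A : {set {perm I}}) s :
  p \in AutI col -> p *: A = A :* p ->
  hf_eq (hf_act p (Node (image (fun g => fstar col f (mol_comp g s)) A)))
        (Node (image (fun g => fstar col f (mol_comp g (mol_comp p s))) A)).
Proof.
move=> p_Aut pA; rewrite (eq_image (frefl _) (fun g => congr1 _ (mol_compM g p s))).
apply: (hf_act_image (G := fun g => fstar col f (mol_comp g s)) pA) => g _.
by rewrite -mol_compM; apply: fstar_comp.
Qed.

End Molecules.

Theorem lemma6 (I C : finType) (col : I -> C) (k : nat) (hk : 1 <= k)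
  (phi : form C k) (G H : {group {perm I}})
  (hphi : wf_form phi) (hHG : H \subset G)
  (hG : commutes_Aut col G) (hH : commutes_Aut col H)
  (sigma : {ffun 'I_k -> I}) (hsigma : molecule sigma)
  (pi : {perm I}) (hpi : pi \in AutI col) :
  hf_eq (hf_act pi (ostar col phi G H sigma))
        (ostar col phi G H (mol_comp pi sigma)).
Proof.
apply: hf_orbit_act (hG pi hpi) _.
case: phi {hphi} => [i | l].
  case: eqP => _; first exact: (fstar_comp (FC C i) sigma hpi).
  (* For [H != 1] the union is, up to conversion, the orbit [H (sigma i)]. *)
  exact: hf_orbit_act (hH pi hpi) (fstar_comp (FC C i) sigma hpi).
have unionE s :
    Node (flatten [seq hf_elems (fstar col (FS l) (mol_comp h s)) | h <- enum H]) =
    hf_union (Node (image (fun h => fstar col (FS l) (mol_comp h s)) H)).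
  by rewrite /hf_union /= -map_comp.
rewrite !unionE hf_union_act; apply: hf_eq_union.
exact: fstar_image_comp hpi (hH pi hpi).
Qed.
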